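(* Let $P_1,P_2,P_3$ be the vertices of an equilateral triangle in $\mathbb{C}$, and let $$F_1(z)=\tfrac{z+P_1}{2},\qquad F_2(z)=\tfrac{z+P_2}{2},\qquad F_3(z)=\tfrac{3P_3-z}{2}.$$ Put $Q_1=F_3(P_1)=\tfrac{3P_3-P_1}{2}$, $Q_2=F_3(P_2)=\tfrac{3P_3-P_2}{2}$ and $V_0=\{P_1,P_2,P_3,Q_1,Q_2\}$. Let $$k=\frac{3+\sqrt{41}}{16},\qquad R_2=1,\qquad R_1=\frac{\sqrt{41}-1}{4}.$$ Define the level-1 network $G_1$ on vertex set $V_0$ with the following six edges and resistances: $P_1P_2$ has resistance $R_1$; $P_1P_3$ and $P_2P_3$ have resistance $R_2$; $Q_1Q_2$ has resistance $kR_1$; $Q_1P_3$ and $Q_2P_3$ have resistance $kR_2$. Define the level-2 network $G_2$ on vertex set $V_1=F_1(V_0)\cup F_2(V_0)\cup F_3(V_0)\subset\mathbb{C}$ (points are identified when they coincide as points of $\mathbb{C}$) whose edges are, for each $i\in\{1,2,3\}$ and each edge $pq$ of $G_1$ with resistance $r$, an edge $F_i(p)F_i(q)$ with the same resistance $r$ (parallel edges, if any, combine by adding conductances). Then for all $p,q\in V_0$, $$R^{G_1}_{\mathrm{eff}}(p,q)=k\,R^{G_2}_{\mathrm{eff}}(p,q).$$ Equivalently, the trace (Schur complement onto $V_0$) of the conductance Laplacian of $G_2$ equals $k$ times the conductance Laplacian of $G_1$.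
   Context: A resistance network is a finite vertex set with edges carrying positive resistances $r$ (conductance $c=1/r$); its energy is $\mathscr{E}(u)=\sum_{\text{edges }pq} c_{pq}(u(p)-u(q))^2$ for $u$ a real function on the vertices. For vertices $p\neq q$ of a connected network, the effective resistance is defined by $1/R_{\mathrm{eff}}(p,q)=\inf\{\mathscr{E}(u): u(p)=1,\ u(q)=0\}$, and $R_{\mathrm{eff}}(p,p)=0$. The trace of the network onto a subset $V$ of vertices is the quadratic form $u\mapsto\inf\{\mathscr{E}(g): g|_{V}=u\}$ on functions on $V$. The fractalina is the attractor of the iterated function system $\{F_1,F_2,F_3\}$. *)

From Stdlib Require Import Reals Lra List Classical ClassicalEpsilon.
Import ListNotations.
Open Scope R_scope.

(* Complex numbers represented as pairs of reals (x, y) = x + i y. *)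
Definition Cpt := (R * R)%type.
Definition Cadd (z w : Cpt) : Cpt := (fst z + fst w, snd z + snd w).
Definition Cscal (a : R) (z : Cpt) : Cpt := (a * fst z, a * snd z).
Definition Csub (z w : Cpt) : Cpt := (fst z - fst w, snd z - snd w).
Definition Cabs (z : Cpt) : R := sqrt (fst z ^ 2 + snd z ^ 2).
Definition Cdist (z w : Cpt) : R := Cabs (Csub z w).

Definition equilateral (P1 P2 P3 : Cpt) : Prop :=
  P1 <> P2 /\ Cdist P1 P2 = Cdist P2 P3 /\ Cdist P2 P3 = Cdist P3 P1.

Definition F1 (P1 : Cpt) (z : Cpt) : Cpt := Cscal (1/2) (Cadd z P1).
Definition F2 (P2 : Cpt) (z : Cpt) : Cpt := Cscal (1/2) (Cadd z P2).
Definition F3 (P3 : Cpt) (z : Cpt) : Cpt := Cscal (1/2) (Csub (Cscal 3 P3) z).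

Definition kk : R := (3 + sqrt 41) / 16.
Definition Res2 : R := 1.
Definition Res1 : R := (sqrt 41 - 1) / 4.

(* A resistance network: a list of edges (p, q, r), r the resistance.
   Vertices are points of the plane, so coinciding points are identified;
   parallel edges add conductances since energies add. *)
Definition network := list (Cpt * Cpt * R).

Definition energy (G : network) (u : Cpt -> R) : R :=
  fold_right (fun e acc => / (snd e) * (u (fst (fst e)) - u (snd (fst e))) ^ 2 + acc) 0 G.

Definition is_glb (S : R -> Prop) (m : R) : Prop :=
  (forall x, S x -> m <= x) /\ (forall m', (forall x, S x -> m' <= x) -> m' <= m).

Definition Rinf (S : R -> Prop) : R :=
  epsilon (inhabits 0) (fun m => is_glb S m).

(* Effective resistance: 1/R(p,q) = inf { E(u) : u p = 1, u q = 0 }, R(p,p) = 0.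
   Functions u are taken on all of the plane; only their values at vertices matter. *)
Definition Reff (G : network) (p q : Cpt) : R :=
  if excluded_middle_informative (p = q) then 0
  else / Rinf (fun e => exists u : Cpt -> R, u p = 1 /\ u q = 0 /\ e = energy G u).

Definition Q1 (P1 P3 : Cpt) : Cpt := F3 P3 P1.
Definition Q2 (P2 P3 : Cpt) : Cpt := F3 P3 P2.

Definition V0 (P1 P2 P3 : Cpt) : list Cpt := [P1; P2; P3; Q1 P1 P3; Q2 P2 P3].

Definition G1 (P1 P2 P3 : Cpt) : network :=
  [ (P1, P2, Res1); (P1, P3, Res2); (P2, P3, Res2);
    (Q1 P1 P3, Q2 P2 P3, kk * Res1);
    (Q1 P1 P3, P3, kk * Res2); (Q2 P2 P3, P3, kk * Res2) ].

Definition map_edge (f : Cpt -> Cpt) (e : Cpt * Cpt * R) : Cpt * Cpt * R :=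
  (f (fst (fst e)), f (snd (fst e)), snd e).

Definition G2 (P1 P2 P3 : Cpt) : network :=
  map (map_edge (F1 P1)) (G1 P1 P2 P3) ++
  map (map_edge (F2 P2)) (G1 P1 P2 P3) ++
  map (map_edge (F3 P3)) (G1 P1 P2 P3).

From Stdlib Require Import Reals List.
From Stdlib Require Import Lra Lia ClassicalEpsilon.
Import ListNotations.
Open Scope R_scope.

(* Write a = P1 - P3, b = P2 - P3.  All twelve vertices of G2 are points
   P3 + x a + y b with explicit rational coordinates (x, y); we number them
   0..11, vertices 0..4 being V0 = {P1, P2, P3, Q1, Q2}.  Transporting along
   this numbering, G1 and G2 become networks on labels, and the whole
   statement reduces to two algebraic identities about the labelled G2, whose
   only non-rational ingredient is the relation 8 k^2 = 3 k + 1: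
   - [harm_energy]: the harmonic extension [harm v] of boundary data v on
     labels 0..4 has G2-energy exactly k times the G1-energy of v (the trace
     of G2 onto V0 is k G1);
   - [energy_split]: every v splits orthogonally as [harm v] plus a function
     vanishing on the boundary (Dirichlet principle), so E2(v) >= k E1(v).
   A general variational lemma [Reff_scale] turns "E2 >= k E1, with equality
   attained by an extension of any boundary data" into R_eff^{N1} = k R_eff^{N2}.
   The equilateral hypothesis is only used to know that P1, P2, P3 are affinely
   independent, so that the twelve labels give twelve distinct points of the
   plane and the harmonic extension can be realised as a function on the plane. *)

(* The constant k is a root of 8 k^2 = 3 k + 1, and R1 = 4 k - 1, R2 = 1:
   every resistance of the problem is a polynomial in k. *)
Lemma kk_quadratic : 8 * (kk * kk) = 3 * kk + 1.
Proof.
  unfold kk. pose proof (sqrt_sqrt 41 ltac:(lra)). nra.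
Qed.

Lemma kk_gt : 1/2 < kk.
Proof.
  pose proof (sqrt_pos 41). pose proof kk_quadratic. unfold kk in *. nra.
Qed.

Lemma Res1_kk : Res1 = 4 * kk - 1.
Proof. unfold Res1, kk. lra. Qed.

Definition lnet := list (nat * nat * R).

Definition lenergy (G : lnet) (v : nat -> R) : R :=
  fold_right (fun e acc => / snd e * (v (fst (fst e)) - v (snd (fst e))) ^ 2 + acc) 0 G.

Lemma lenergy_nonneg (G : lnet) (v : nat -> R) :
  (forall e, In e G -> 0 < snd e) -> 0 <= lenergy G v.
Proof.
  induction G as [|e G IH]; cbn; intros Hpos; [lra|].
  apply Rplus_le_le_0_compat.
  - apply Rmult_le_pos; [|apply pow2_ge_0].
    left. apply Rinv_0_lt_compat, Hpos. left. reflexivity.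
  - apply IH. intros e' He'. apply Hpos. right. exact He'.
Qed.

Definition labels_below (n : nat) (G : lnet) : Prop :=
  forall e, In e G -> (fst (fst e) < n)%nat /\ (snd (fst e) < n)%nat.

Lemma lenergy_ext (n : nat) (G : lnet) (v w : nat -> R) :
  labels_below n G -> (forall i, (i < n)%nat -> v i = w i) -> lenergy G v = lenergy G w.
Proof.
  intros Hlab Hvw. unfold lenergy in *.
  induction G as [|e G IH]; cbn [fold_right]; [reflexivity|].
  destruct (Hlab e (or_introl eq_refl)) as [Hp Hq].
  rewrite (Hvw _ Hp), (Hvw _ Hq), IH; [reflexivity|].
  intros e' He'. apply Hlab. right. exact He'.
Qed.

Definition relabel (m : nat -> nat) (e : nat * nat * R) : nat * nat * R :=
  (m (fst (fst e)), m (snd (fst e)), snd e).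

(* Labelled G1 on 0 = P1, 1 = P2, 2 = P3, 3 = Q1, 4 = Q2.  The three maps
   F1, F2, F3 send V0 to the labels m1, m2, m3 of V1 (see [F1_sites] below),
   where 5, 6, 7 are the midpoints of P1P2, P1P3, P2P3, and 8, 9, 10, 11 are
   F3(Q1), F3(Q2), F1(Q2), F2(Q1). *)
Definition G1lab : lnet :=
  [(0%nat, 1%nat, Res1); (0%nat, 2%nat, Res2); (1%nat, 2%nat, Res2);
   (3%nat, 4%nat, kk * Res1); (3%nat, 2%nat, kk * Res2); (4%nat, 2%nat, kk * Res2)].

Definition m1 (i : nat) : nat := match i with 0 => 0 | 1 => 5 | 2 => 6 | 3 => 8 | _ => 10 end%nat.
Definition m2 (i : nat) : nat := match i with 0 => 5 | 1 => 1 | 2 => 7 | 3 => 11 | _ => 9 end%nat.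
Definition m3 (i : nat) : nat := match i with 0 => 3 | 1 => 4 | 2 => 2 | 3 => 8 | _ => 9 end%nat.

Definition G2lab : lnet :=
  map (relabel m1) G1lab ++ map (relabel m2) G1lab ++ map (relabel m3) G1lab.

Lemma G1lab_pos : forall e, In e G1lab -> 0 < snd e.
Proof.
  pose proof kk_gt. intros e He.
  repeat destruct He as [<- | He]; cbn; rewrite ?Res1_kk; unfold Res2; [nra ..| contradiction].
Qed.

Lemma G2lab_pos : forall e, In e G2lab -> 0 < snd e.
Proof.
  intros e He. unfold G2lab in He. rewrite !in_app_iff in He.
  destruct He as [He | [He | He]]; apply in_map_iff in He;
    destruct He as [e' [<- He']]; exact (G1lab_pos e' He').
Qed.

Lemma G1lab_labels : labels_below 5 G1lab.
Proof.
  intros e He. repeat destruct He as [<- | He]; cbn; [lia ..| contradiction].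
Qed.

Lemma G2lab_labels : labels_below 12 G2lab.
Proof.
  intros e He. repeat destruct He as [<- | He]; cbn; [lia ..| contradiction].
Qed.

(* The harmonic extension to the interior labels 5..11 of boundary data on
   0..4: the unique extension satisfying Kirchhoff's current law at every
   interior vertex of G2 (coefficients obtained by solving that linear
   system).  It ignores the values at Q1, Q2, which in G2 are joined only to
   each other and to P3. *)
Definition harm (v : nat -> R) (i : nat) : R :=
  let k := kk in
  match i with
  | 5 => (3*k - 1)/2 * v 0%nat + (3*k - 1)/2 * v 1%nat + (2 - 3*k) * v 2%nat
  | 6 => (1 + 2*k)/5 * v 0%nat + (3*k - 1)/5 * v 1%nat + (1 - k) * v 2%nat
  | 7 => (3*k - 1)/5 * v 0%nat + (1 + 2*k)/5 * v 1%nat + (1 - k) * v 2%nat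
  | 8 => (3 + k)/16 * v 0%nat + (5*k - 1)/16 * v 1%nat + (7 - 3*k)/8 * v 2%nat
  | 9 => (5*k - 1)/16 * v 0%nat + (3 + k)/16 * v 1%nat + (7 - 3*k)/8 * v 2%nat
  | 10 => (1 + 3*k)/8 * v 0%nat + (7*k - 3)/8 * v 1%nat + 5*(1 - k)/4 * v 2%nat
  | 11 => (7*k - 3)/8 * v 0%nat + (1 + 3*k)/8 * v 1%nat + 5*(1 - k)/4 * v 2%nat
  | _ => v i
  end.

Lemma harm_energy (v : nat -> R) :
  lenergy G2lab (harm v) = kk * lenergy G1lab v.
Proof.
  pose proof kk_quadratic as Hk. pose proof kk_gt.
  unfold lenergy, G2lab, G1lab, harm; cbn. rewrite Res1_kk; unfold Res2.
  field [Hk]; split; lra.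
Qed.

(* Dirichlet principle: v - harm v vanishes on the boundary and is
   energy-orthogonal to the harmonic function harm v. *)
Lemma energy_split (v : nat -> R) :
  lenergy G2lab v = lenergy G2lab (harm v) + lenergy G2lab (fun i => v i - harm v i).
Proof.
  pose proof kk_quadratic as Hk. pose proof kk_gt.
  unfold lenergy, G2lab, G1lab, harm; cbn. rewrite Res1_kk; unfold Res2.
  field [Hk]; split; lra.
Qed.

Definition affine (P1 P2 P3 : Cpt) (ab : R * R) : Cpt :=
  (fst P3 + fst ab * (fst P1 - fst P3) + snd ab * (fst P2 - fst P3),
   snd P3 + fst ab * (snd P1 - snd P3) + snd ab * (snd P2 - snd P3)).

(* Twice the signed area of the triangle; nonzero iff it is nondegenerate. *)
Definition cross (P1 P2 P3 : Cpt) : R :=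
  (fst P1 - fst P3) * (snd P2 - snd P3) - (snd P1 - snd P3) * (fst P2 - fst P3).

Lemma affine_inj (P1 P2 P3 : Cpt) (ab ab' : R * R) :
  cross P1 P2 P3 <> 0 -> affine P1 P2 P3 ab = affine P1 P2 P3 ab' -> ab = ab'.
Proof.
  destruct ab as [a b], ab' as [a' b']. unfold affine, cross; cbn.
  intros Hc E. injection E as Ex Ey.
  set (ax := fst P1 - fst P3) in *; set (bx := fst P2 - fst P3) in *.
  set (ay := snd P1 - snd P3) in *; set (by_ := snd P2 - snd P3) in *.
  (* Cramer's rule for the 2x2 system (a - a', b - b') . (ax bx ; ay by_) = 0 *)
  assert (Ha : (a - a') * (ax * by_ - ay * bx) = 0).
  { replace ((a - a') * (ax * by_ - ay * bx))
      with (((a - a') * ax + (b - b') * bx) * by_ - ((a - a') * ay + (b - b') * by_) * bx)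
      by ring.
    replace ((a - a') * ax + (b - b') * bx) with 0 by lra.
    replace ((a - a') * ay + (b - b') * by_) with 0 by lra. ring. }
  assert (Hb : (b - b') * (ax * by_ - ay * bx) = 0).
  { replace ((b - b') * (ax * by_ - ay * bx))
      with (((a - a') * ay + (b - b') * by_) * ax - ((a - a') * ax + (b - b') * bx) * ay)
      by ring.
    replace ((a - a') * ax + (b - b') * bx) with 0 by lra.
    replace ((a - a') * ay + (b - b') * by_) with 0 by lra. ring. }
  apply Rmult_integral in Ha as [Ha | Ha]; [|contradiction].
  apply Rmult_integral in Hb as [Hb | Hb]; [|contradiction].
  f_equal; lra.
Qed.

(* An equilateral triangle with two distinct vertices is nondegenerate:
   with |a|^2 = |b|^2 = |a - b|^2 = t > 0 one gets cross^2 = 3 t^2 / 4. *)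
Lemma equilateral_nondegenerate (P1 P2 P3 : Cpt) :
  equilateral P1 P2 P3 -> cross P1 P2 P3 <> 0.
Proof.
  destruct P1 as [x1 y1], P2 as [x2 y2], P3 as [x3 y3].
  unfold equilateral, Cdist, Cabs, Csub, cross; cbn [fst snd].
  intros [Hne [H12 H23]] Hc.
  apply sqrt_inj in H12, H23; [| (apply Rplus_le_le_0_compat; apply pow2_ge_0) ..].
  assert (Ht : 0 < (x1 - x2) ^ 2 + (y1 - y2) ^ 2).
  { destruct (Req_dec x1 x2), (Req_dec y1 y2); [|nra ..]. subst. contradiction. }
  nra.
Qed.

Definition coords (i : nat) : R * R :=
  match i with
  | 0 => (1, 0) | 1 => (0, 1) | 2 => (0, 0) | 3 => (-1/2, 0) | 4 => (0, -1/2)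
  | 5 => (1/2, 1/2) | 6 => (1/2, 0) | 7 => (0, 1/2) | 8 => (1/4, 0) | 9 => (0, 1/4)
  | 10 => (1/2, -1/4) | _ => (-1/4, 1/2)
  end.

Definition site (P1 P2 P3 : Cpt) (i : nat) : Cpt := affine P1 P2 P3 (coords i).

Lemma coords_inj (i j : nat) : (i < 12)%nat -> (j < 12)%nat -> coords i = coords j -> i = j.
Proof.
  intros Hi Hj E.
  do 12 (destruct i as [|i];
    [do 12 (destruct j as [|j]; [cbn in E; first [reflexivity | injection E; intros; lra] |]); lia |]).
  lia.
Qed.

Lemma site_inj (P1 P2 P3 : Cpt) (i j : nat) : cross P1 P2 P3 <> 0 ->
  (i < 12)%nat -> (j < 12)%nat -> site P1 P2 P3 i = site P1 P2 P3 j -> i = j.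
Proof.
  intros Hc Hi Hj E. apply coords_inj; [assumption .. |].
  exact (affine_inj P1 P2 P3 _ _ Hc E).
Qed.

Ltac solve_point :=
  match goal with P1 : Cpt, P2 : Cpt, P3 : Cpt |- _ =>
    destruct P1, P2, P3 end;
  unfold site, affine, coords, m1, m2, m3, Q1, Q2, F1, F2, F3, Cscal, Cadd, Csub; cbn;
  f_equal; lra.

Lemma V0_sites (P1 P2 P3 : Cpt) :
  V0 P1 P2 P3 = map (site P1 P2 P3) [0; 1; 2; 3; 4]%nat.
Proof.
  unfold V0. cbn [map]. repeat f_equal; solve_point.
Qed.

Lemma F1_sites (P1 P2 P3 : Cpt) (i : nat) : (i < 5)%nat ->
  F1 P1 (site P1 P2 P3 i) = site P1 P2 P3 (m1 i).
Proof. intros Hi. do 5 (destruct i as [|i]; [solve_point |]). lia. Qed.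

Lemma F2_sites (P1 P2 P3 : Cpt) (i : nat) : (i < 5)%nat ->
  F2 P2 (site P1 P2 P3 i) = site P1 P2 P3 (m2 i).
Proof. intros Hi. do 5 (destruct i as [|i]; [solve_point |]). lia. Qed.

Lemma F3_sites (P1 P2 P3 : Cpt) (i : nat) : (i < 5)%nat ->
  F3 P3 (site P1 P2 P3 i) = site P1 P2 P3 (m3 i).
Proof. intros Hi. do 5 (destruct i as [|i]; [solve_point |]). lia. Qed.

Definition place (f : nat -> Cpt) (e : nat * nat * R) : Cpt * Cpt * R :=
  (f (fst (fst e)), f (snd (fst e)), snd e).

Lemma energy_place (f : nat -> Cpt) (G : lnet) (u : Cpt -> R) :
  energy (map (place f) G) u = lenergy G (fun i => u (f i)).
Proof.
  unfold energy, lenergy.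
  induction G as [|e G IH]; cbn [map fold_right]; [reflexivity|]. now rewrite IH.
Qed.

Lemma map_edge_place (F : Cpt -> Cpt) (f : nat -> Cpt) (m : nat -> nat) (n : nat) (G : lnet) :
  labels_below n G -> (forall i, (i < n)%nat -> F (f i) = f (m i)) ->
  map (map_edge F) (map (place f) G) = map (place f) (map (relabel m) G).
Proof.
  intros Hlab HF. rewrite !map_map. apply map_ext_in. intros e He.
  destruct (Hlab e He) as [Hp Hq].
  unfold map_edge, place, relabel; cbn [fst snd]. now rewrite (HF _ Hp), (HF _ Hq).
Qed.

Lemma G1_placed (P1 P2 P3 : Cpt) : G1 P1 P2 P3 = map (place (site P1 P2 P3)) G1lab.
Proof.
  unfold G1, G1lab, place. cbn [map fst snd]. repeat f_equal; solve_point.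
Qed.

Lemma G2_placed (P1 P2 P3 : Cpt) : G2 P1 P2 P3 = map (place (site P1 P2 P3)) G2lab.
Proof.
  unfold G2, G2lab. rewrite G1_placed, !map_app.
  rewrite (map_edge_place _ _ m1 5), (map_edge_place _ _ m2 5), (map_edge_place _ _ m3 5);
    [reflexivity | first [exact G1lab_labels | apply F1_sites | apply F2_sites | apply F3_sites] ..].
Qed.

Lemma lift_labels (f : nat -> Cpt) (n : nat) (w : nat -> R) :
  (forall i j, (i < n)%nat -> (j < n)%nat -> f i = f j -> i = j) ->
  exists u : Cpt -> R, forall i, (i < n)%nat -> u (f i) = w i.
Proof.
  intros Hinj.
  exists (fun z => match excluded_middle_informative (exists i, (i < n)%nat /\ f i = z) with
           | left H => w (proj1_sig (constructive_indefinite_description _ H))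
           | right _ => 0 end).
  intros i Hi.
  destruct (excluded_middle_informative _) as [H | H].
  - destruct (constructive_indefinite_description _ H) as [j [Hj Hji]]; cbn.
    now rewrite (Hinj j i Hj Hi Hji).
  - exfalso. apply H. exists i. split; [exact Hi | reflexivity].
Qed.

Definition unit_energies (E : (Cpt -> R) -> R) (p q : Cpt) : R -> Prop :=
  fun e => exists u : Cpt -> R, u p = 1 /\ u q = 0 /\ e = E u.

Lemma glb_exists (S : R -> Prop) :
  (exists x, S x) -> (forall x, S x -> 0 <= x) -> exists m, is_glb S m.
Proof.
  intros [x0 Hx0] Hpos.
  destruct (completeness (fun x => S (- x))) as [m [Hub Hlub]].
  - exists 0. intros x Hx. specialize (Hpos _ Hx). lra.
  - exists (- x0). now rewrite Ropp_involutive.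
  - exists (- m). split.
    + intros x Hx. enough (- x <= m) by lra. apply Hub. now rewrite Ropp_involutive.
    + intros m' Hm'. enough (m <= - m') by lra.
      apply Hlub. intros y Hy. specialize (Hm' _ Hy). lra.
Qed.

Lemma Rinf_glb (S : R -> Prop) (m : R) : is_glb S m -> Rinf S = m.
Proof.
  intros Hm. unfold Rinf.
  destruct (epsilon_spec (inhabits 0) (fun m => is_glb S m) (ex_intro _ m Hm)) as [Hlow Hgreat].
  destruct Hm as [Hlow' Hgreat'].
  apply Rle_antisym; [apply Hgreat' | apply Hgreat]; assumption.
Qed.

Lemma is_glb_scale (S1 S2 : R -> Prop) (k m : R) : 0 < k -> is_glb S1 m ->
  (forall x, S2 x -> exists y, S1 y /\ k * y <= x) ->
  (forall y, S1 y -> exists x, S2 x /\ x <= k * y) ->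
  is_glb S2 (k * m).
Proof.
  intros Hk [Hlow Hgreat] Hdom Hreach. split.
  - intros x Hx. destruct (Hdom x Hx) as [y [Hy Hyx]].
    pose proof (Hlow y Hy). nra.
  - intros m' Hm'.
    assert (Hdiv : m' / k <= m).
    { apply Hgreat. intros y Hy. destruct (Hreach y Hy) as [x [Hx Hxy]].
      pose proof (Hm' x Hx). apply (Rmult_le_reg_l k); [exact Hk |].
      replace (k * (m' / k)) with m' by (field; lra). lra. }
    apply (Rmult_le_compat_l k) in Hdiv; [|lra].
    replace (k * (m' / k)) with m' in Hdiv by (field; lra). exact Hdiv.
Qed.

Lemma Reff_scale (N1 N2 : network) (k : R) (p q : Cpt) : 0 < k ->
  (forall u, 0 <= energy N1 u) ->
  (forall u, k * energy N1 u <= energy N2 u) ->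
  (forall u, exists u', u' p = u p /\ u' q = u q /\ energy N2 u' = k * energy N1 u) ->
  Reff N1 p q = k * Reff N2 p q.
Proof.
  intros Hk Hnonneg Hlower Hext. unfold Reff.
  destruct (excluded_middle_informative (p = q)) as [_ | Hpq]; [ring |].
  destruct (glb_exists (unit_energies (energy N1) p q)) as [m Hm].
  - set (ind := fun z => if excluded_middle_informative (z = p) then 1 else 0).
    exists (energy N1 ind), ind. unfold ind.
    destruct (excluded_middle_informative (p = p)), (excluded_middle_informative (q = p));
      [congruence | repeat split | congruence ..].
  - intros x [u [_ [_ ->]]]. apply Hnonneg.
  - assert (Hm2 : is_glb (unit_energies (energy N2) p q) (k * m)).
    { apply (is_glb_scale (unit_energies (energy N1) p q)); [exact Hk | exact Hm | |].
      - intros x [u [Hp [Hq ->]]]. exists (energy N1 u). split; [now exists u | apply Hlower].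
      - intros y [u [Hp [Hq ->]]]. destruct (Hext u) as [u' [Hp' [Hq' HE]]].
        exists (energy N2 u'). split; [exists u'; now rewrite Hp', Hq' | lra]. }
    change (/ Rinf (unit_energies (energy N1) p q) = k * / Rinf (unit_energies (energy N2) p q)).
    rewrite (Rinf_glb _ _ Hm), (Rinf_glb _ _ Hm2).
    destruct (Req_dec m 0) as [-> | Hm0].
    + rewrite Rmult_0_r, Rinv_0. ring.
    + field. lra.
Qed.

Lemma G2_energy_lower (P1 P2 P3 : Cpt) (u : Cpt -> R) :
  kk * energy (G1 P1 P2 P3) u <= energy (G2 P1 P2 P3) u.
Proof.
  rewrite G1_placed, G2_placed, !energy_place, energy_split, harm_energy.
  match goal with |- _ <= _ + lenergy G2lab ?w =>
    pose proof (lenergy_nonneg G2lab w G2lab_pos) end.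
  lra.
Qed.

(* Equality is attained by the harmonic extension, realised in the plane. *)
Lemma G2_energy_extension (P1 P2 P3 : Cpt) (u : Cpt -> R) : equilateral P1 P2 P3 ->
  exists u', (forall i, (i < 5)%nat -> u' (site P1 P2 P3 i) = u (site P1 P2 P3 i)) /\
             energy (G2 P1 P2 P3) u' = kk * energy (G1 P1 P2 P3) u.
Proof.
  intros Heq. set (v := fun i => u (site P1 P2 P3 i)).
  destruct (lift_labels (site P1 P2 P3) 12 (harm v)) as [u' Hu'].
  { intros i j. apply site_inj, equilateral_nondegenerate, Heq. }
  exists u'. split.
  - intros i Hi. rewrite Hu' by lia. do 5 (destruct i as [|i]; [reflexivity |]). lia.
  - rewrite G1_placed, G2_placed, !energy_place, <- harm_energy.
    exact (lenergy_ext 12 G2lab _ (harm v) G2lab_labels Hu').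
Qed.

Theorem mainTheorem1 (P1 P2 P3 : Cpt) (Heq : equilateral P1 P2 P3) :
  forall p q : Cpt, In p (V0 P1 P2 P3) -> In q (V0 P1 P2 P3) ->
    Reff (G1 P1 P2 P3) p q = kk * Reff (G2 P1 P2 P3) p q.
Proof.
  intros p q Hp Hq. rewrite V0_sites in Hp, Hq.
  apply in_map_iff in Hp as [i [<- Hi]], Hq as [j [<- Hj]].
  assert (Hi5 : (i < 5)%nat) by (cbn in Hi; lia).
  assert (Hj5 : (j < 5)%nat) by (cbn in Hj; lia).
  apply Reff_scale.
  - pose proof kk_gt. lra.
  - intros u. rewrite G1_placed, energy_place. apply lenergy_nonneg, G1lab_pos.
  - apply G2_energy_lower.
  - intros u. destruct (G2_energy_extension P1 P2 P3 u Heq) as [u' [Hagree HE]].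
    exists u'. auto.
Qed.
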